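(* Let $\mathfrak F=(X,\parallel,Y,S_\vee)$ be a frame satisfying axioms (F0)–(F4). Then for every $x\in X$, $$S_\vee x=\overline{\eta}_S(\Gamma x)=\bigcup_{z\in\Gamma x}S_\vee z=\Gamma(\widehat\nu(x)).$$
   Context: A polarity is $(X,\parallel,Y)$ with $X,Y$ nonempty sets and ${\parallel}\subseteq X\times Y$; $I=(X\times Y)\setminus{\parallel}$. For $U\subseteq X$, $U'=\{y\in Y:\forall x\in U\;x\parallel y\}$; for $V\subseteq Y$, $V'=\{x\in X:\forall y\in V\;x\parallel y\}$. $A\subseteq X$ is stable if $A=A''$; $B\subseteq Y$ is co-stable if $B=B''$; $\mathcal G(X),\mathcal G(Y)$ are the complete lattices of stable/co-stable sets (meets = intersections, joins $\bigvee_jA_j=(\bigcup_jA_j)''$). Preorders: $x\preceq z$ iff $\{x\}'\subseteq\{z\}'$ on $X$; $y\preceq v$ iff $\{y\}'\subseteq\{v\}'$ on $Y$; the polarity is separated if both are partial orders (then written $\leq$). For a point $u$, $\Gamma u=\{w:u\preceq w\}$ (same sort). A closed element of $\mathcal G(X)$ is a set $\Gamma x$ ($x\in X$), of $\mathcal G(Y)$ a set $\Gamma y$ ($y\in Y$). A frame is $\mathfrak F=(X,\parallel,Y,S_\vee)$ with $S_\vee\subseteq Y\times X$; $S_\vee x=\{y: yS_\vee x\}$, $yS_\vee=\{x:yS_\vee x\}$; the Galois dual relation $S'_\vee\subseteq X\times X$ is $zS'_\vee x$ iff $\forall y\in Y(yS_\vee x\Rightarrow z\parallel y)$. Axioms: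 (F0) $\forall x\exists y\;xIy$ and $\forall y\exists x\;xIy$; (F1) the polarity is separated; (F2) for each $x\in X$, $S_\vee x$ is a closed element of $\mathcal G(Y)$; (F3) for each $y\in Y$, $yS_\vee$ is a down-set of $(X,\leq)$; (F4) for each $x$, $\{z: zS'_\vee x\}\in\mathcal G(X)$ and for each $z$, $\{x:zS'_\vee x\}\in\mathcal G(X)$. By (F1),(F2), $\widehat\nu(x)$ denotes the unique $y\in Y$ with $S_\vee x=\Gamma y$. For $A\in\mathcal G(X)$, $\overline\eta_S(A)=(\bigcup_{x\in A}S_\vee x)''\in\mathcal G(Y)$. *)

From mathcomp Require Import all_boot.
From mathcomp Require Import boolp classical_sets.
Set Implicit Arguments. Unset Strict Implicit. Unset Printing Implicit Defensive.
Local Open Scope classical_set_scope.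

Section Polarity.
Variables (X Y : Type) (par : X -> Y -> Prop).

Definition incid (x : X) (y : Y) : Prop := ~ par x y.

Definition primeX (U : set X) : set Y := [set y | forall x, U x -> par x y].
Definition primeY (V : set Y) : set X := [set x | forall y, V y -> par x y].

Definition stableX (A : set X) : Prop := primeY (primeX A) = A.
Definition costableY (B : set Y) : Prop := primeX (primeY B) = B.

Definition preX (x z : X) : Prop := primeX [set x] `<=` primeX [set z].
Definition preY (y v : Y) : Prop := primeY [set y] `<=` primeY [set v].

Definition separated : Prop :=
  (forall x z, preX x z -> preX z x -> x = z) /\
  (forall y v, preY y v -> preY v y -> y = v).

Definition GammaX (x : X) : set X := [set w | preX x w].
Definition GammaY (y : Y) : set Y := [set w | preY y w].

Definition closedY (B : set Y) : Prop := exists y, B = GammaY y.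

Variable S : Y -> X -> Prop.

Definition Sx (x : X) : set Y := [set y | S y x].
Definition yS (y : Y) : set X := [set x | S y x].

Definition Sdual (z x : X) : Prop := forall y, S y x -> par z y.

Definition F0 : Prop :=
  (forall x, exists y, incid x y) /\ (forall y, exists x, incid x y).
Definition F1 : Prop := separated.
Definition F2 : Prop := forall x, closedY (Sx x).
Definition F3 : Prop := forall y x z, preX z x -> yS y x -> yS y z.
Definition F4 : Prop :=
  (forall x, stableX [set z | Sdual z x]) /\
  (forall z, stableX [set x | Sdual z x]).

Definition frame_axioms : Prop := [/\ F0, F1, F2, F3 & F4].

Definition etaS (A : set X) : set Y :=
  primeX (primeY (\bigcup_(x in A) Sx x)).

End Polarity.

From mathcomp Require Import all_boot.
From mathcomp Require Import boolp classical_sets.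
Set Implicit Arguments. Unset Strict Implicit. Unset Printing Implicit Defensive.
Local Open Scope classical_set_scope.

(* Three facts about polarities and frames give the theorem:
   - a principal up-set Γy of Y is the co-stable set {y}'' (so closed
     elements of G(Y) are indeed Galois-closed), and in a separated polarity
     y ↦ Γy is injective;
   - (F3) says that each y S_∨ is a down-set, hence for z ∈ Γx we have
     S_∨ z ⊆ S_∨ x, and by reflexivity ⋃_{z ∈ Γx} S_∨ z = S_∨ x;
   - the triple-prime law U''' = U' makes the double prime of a co-stable set
     the set itself.
   For the theorem, (F2) gives ν with S_∨ x = Γν, unique by (F1); then
   η_S(Γx) = (⋃_{z∈Γx} S_∨ z)'' = (S_∨ x)'' = (Γν)'' = Γν, and all four
   expressions of the statement coincide. *)

Section PolarityFacts.
Variables (X Y : Type) (par : X -> Y -> Prop).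

Lemma primeX_triple (U : set X) :
  primeX par (primeY par (primeX par U)) = primeX par U.
Proof.
apply/seteqP; split => y /=.
- by move=> Hy x Ux; apply: Hy => y' Hy'; exact: Hy'.
- by move=> Hy x Hx; exact: Hx.
Qed.

Lemma GammaY_closure (y : Y) :
  GammaY par y = primeX par (primeY par [set y]).
Proof.
apply/seteqP; split => w /=.
- by move=> Hyw x Hx; exact: (Hyw x Hx w erefl).
- by move=> Hw x Hx _ ->; exact: Hw.
Qed.

Lemma costable_GammaY (y : Y) : costableY par (GammaY par y).
Proof. by rewrite /costableY GammaY_closure primeX_triple. Qed.

Lemma GammaY_inj : separated par -> injective (GammaY par).
Proof.
move=> [_ sepY] y v Hyv.
have Hv : GammaY par y v by rewrite Hyv.
have Hy : GammaY par v y by rewrite -Hyv.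
exact: sepY.
Qed.

End PolarityFacts.

Section FrameFacts.
Variables (X Y : Type) (par : X -> Y -> Prop) (S : Y -> X -> Prop).

(* Under (F3), S_∨ is antitone along Γx, so the union of S_∨ z over the
   principal up-set Γx is attained at its least element x. *)
Lemma bigcup_Sx_GammaX : F3 par S -> forall x,
  \bigcup_(z in GammaX par x) Sx S z = Sx S x.
Proof.
move=> downS x; apply/seteqP; split => y /=.
- by move=> [z Hxz Hyz]; exact: (downS y z x Hxz Hyz).
- by move=> Hyx; exists x.
Qed.

Lemma etaS_GammaX : F3 par S -> forall x nu,
  Sx S x = GammaY par nu -> etaS par S (GammaX par x) = GammaY par nu.
Proof.
move=> downS x nu Hnu.
by rewrite /etaS bigcup_Sx_GammaX // Hnu; exact: costable_GammaY.
Qed.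

End FrameFacts.

Theorem lemma3p10 (X Y : Type) (par : X -> Y -> Prop) (S : Y -> X -> Prop) :
  inhabited X -> inhabited Y ->
  frame_axioms par S ->
  forall x : X,
    (exists! y : Y, Sx S x = GammaY par y) /\
    (forall nu : Y, Sx S x = GammaY par nu ->
       Sx S x = etaS par S (GammaX par x) /\
       etaS par S (GammaX par x) = \bigcup_(z in GammaX par x) Sx S z /\
       \bigcup_(z in GammaX par x) Sx S z = GammaY par nu).
Proof.
move=> _ _ [_ sep closedS downS _] x; split.
- have [nu Hnu] := closedS x.
  exists nu; split => // v Hv.
  exact: (GammaY_inj sep (etrans (esym Hnu) Hv)).
- move=> nu Hnu.
  have Heta := etaS_GammaX downS Hnu.
  by rewrite Heta bigcup_Sx_GammaX.
Qed.
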